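(* Let $\Omega$ be the first uncountable ordinal, $[0,\Omega]$ with the order topology, and $X:=[0,\Omega]^2$. Let $Y:=X\times\{\bullet,\uparrow,\downarrow\}/\!\sim$, where $\sim$ identifies all three points $(\Omega,\Omega,t)$, identifies $(\Omega,\alpha,\bullet)$ with $(\Omega,\alpha,\uparrow)$ for all $\alpha\in[0,\Omega]$, and identifies $(\alpha,\Omega,\bullet)$ with $(\alpha,\Omega,\downarrow)$ for all $\alpha\in[0,\Omega]$; let $\pi:Y\to X$ be induced by the first projection. Then $\pi$ is a branched cover with fibers of cardinality $1$ at $(\Omega,\Omega)$, $2$ on $X_2:=\{\Omega\}\times[0,\Omega)\sqcup[0,\Omega)\times\{\Omega\}$, and $3$ on $[0,\Omega)^2$, and all three strata are normal spaces. Moreover, let $\mu_x$ be the uniform probability measure on the two-point fiber $\pi^{-1}(x)$ for $x\in X_2$ and the point mass for $x=(\Omega,\Omega)$. Then there is no weak$^*$-continuous family $x\mapsto\mu_x$, $x\in X$, of probability measures $\mu_x$ on $\pi^{-1}(x)$ (viewed in $C(Y)^*$) extending this family such that $\mu_x$ gives positive mass to every point of $\pi^{-1}(x)$ for all $x\in[0,\Omega)^2$.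
   Context: A branched cover is a continuous open surjection of compact Hausdorff spaces with uniformly bounded finite fibers. A weak$^*$-continuous family of probability measures $\mu_x$ on $\pi^{-1}(x)$ means $x\mapsto\int f\,d\mu_x$ is continuous on $X$ for every $f\in C(Y)$; such families correspond to conditional expectations $C(Y)\to C(X)$. *)

From HB Require Import structures.
From mathcomp Require Import all_boot all_order all_algebra.
From mathcomp Require Import all_classical all_reals.
From mathcomp Require Import topology_structure product_topology order_topology
  discrete_topology quotient_topology subspace_topology separation_axioms compact.
From mathcomp Require Import normedtype.

Set Implicit Arguments.
Unset Strict Implicit.
Unset Printing Implicit Defensive.

Import Order.TTheory GRing.Theory Num.Theory.
Import numFieldNormedType.Exports.
Local Open Scope classical_set_scope.
Local Open Scope ring_scope.

Definition Label := discrete_topology 'I_3.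
HB.instance Definition _ := Choice.on Label.
HB.instance Definition _ := Topological.on Label.
Lemma Label_discrete : (nbhs : Label -> set_system Label) = principal_filter.
Proof. exact: nbhs_principalE. Qed.
Definition lbullet : Label := (0 : 'I_3).
Definition lup : Label := (1 : 'I_3).
Definition ldown : Label := (2 : 'I_3).

Section Construction.
Context {d : Order.disp_t} (T : orderTopologicalType d) (Omega : T).

Definition Xsp := (T * T)%type.

Definition nf (p : Xsp * Label) : Xsp * Label :=
  let: ((a, b), t) := p in
  if (a == Omega) && (b == Omega) then ((a, b), lbullet)
  else if (a == Omega) && (t == lup) then ((a, b), lbullet)
  else if (b == Omega) && (t == ldown) then ((a, b), lbullet)
  else p.

Definition simrel (p q : Xsp * Label) : bool := nf p == nf q.

Lemma simrel_refl : reflexive simrel.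
Proof. by move=> p; rewrite /simrel. Qed.
Lemma simrel_sym : symmetric simrel.
Proof. by move=> p q; rewrite /simrel eq_sym. Qed.
Lemma simrel_trans : transitive simrel.
Proof. by move=> q p r; rewrite /simrel => /eqP -> /eqP ->. Qed.

Canonical simrel_equiv := EquivRel simrel simrel_refl simrel_sym simrel_trans.

Definition Ysp := quotient_topology {eq_quot simrel_equiv}%qT.
HB.instance Definition _ := Topological.on Ysp.

Definition piY (y : Ysp) : Xsp := (repr y).1.

Definition fiber (x : Xsp) : set Ysp := piY @^-1` [set x].

Definition stratum1 : set Xsp := [set (Omega, Omega)].
Definition stratum2 : set Xsp :=
  [set x : Xsp | (x.1 = Omega /\ (x.2 < Omega)%O) \/ ((x.1 < Omega)%O /\ x.2 = Omega)].
Definition stratum3 : set Xsp := [set x : Xsp | (x.1 < Omega)%O /\ (x.2 < Omega)%O].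

End Construction.

Definition branched_cover (X Y : topologicalType) (p : Y -> X) : Prop :=
  [/\ compact [set: X] /\ hausdorff_space X,
      compact [set: Y] /\ hausdorff_space Y,
      continuous p,
      (forall U : set Y, open U -> open (p @` U)) &
      (forall x : X, exists y, p y = x) /\
      (exists n : nat, forall x : X, p @^-1` [set x] #<= `I_n)%card].

Arguments piY {d T Omega} y.
Arguments fiber {d T} Omega x _.
Arguments stratum1 {d T} Omega _.
Arguments stratum2 {d T} Omega _.
Arguments stratum3 {d T} Omega _.
Arguments Ysp {d T} Omega.

(* The space Y embeds into X * X (each sheet is recorded by the point of the
   top or right edge it is glued to), so it is compact Hausdorff, and pi is
   open as the map induced by a projection.

   Everything else rests on the closing-off argument for the first
   uncountable ordinal: if countably many requirements can each be met in a
   window (eta, xi] above any eta < Omega, iterating produces an increasing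
   sequence whose supremum gam < Omega has all of them met arbitrarily close
   below it.  For the strata, this turns a common limit point of two
   relatively closed disjoint sets outside a stratum into one inside it, so
   their closures in the compact space X are disjoint.  For the weights,
   continuity at the edges forces w(b, a, down) -> 1/2 as b -> Omega for
   every a < Omega, and likewise for up; closing off gives gam with
   w(gam, gam, down) = w(gam, gam, up) = 1/2, so w(gam, gam, bullet) = 0. *)

From Pilot Require Import Defs.
From HB Require Import structures.
From mathcomp Require Import all_boot all_order all_algebra.
From mathcomp Require Import all_classical all_reals.
From mathcomp Require Import topology_structure product_topology order_topology
  discrete_topology quotient_topology subspace_topology separation_axioms compact.
From mathcomp Require Import normedtype.

Import Order.TTheory GRing.Theory Num.Theory.
Import numFieldNormedType.Exports.
Local Open Scope classical_set_scope.
Local Open Scope ring_scope.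
Local Open Scope quotient_scope.

Section ProductTopology.
Context {U V : topologicalType}.

Lemma nbhs_setX {x : U} {y : V} {A : set U} {B : set V} :
  nbhs x A -> nbhs y B -> nbhs (x, y) (A `*` B).
Proof. by move=> nA nB; exists (A, B). Qed.

Lemma nbhs_prodP (p : U * V) P : nbhs p P ->
  exists A B, [/\ nbhs p.1 A, nbhs p.2 B & A `*` B `<=` P].
Proof. by move=> [[A B] /= [nA nB] sub]; exists A, B. Qed.

Lemma closure_prodP (P : set (U * V)) x y :
  closure P (x, y) <->
  forall A B, nbhs x A -> nbhs y B -> exists p, [/\ P p, A p.1 & B p.2].
Proof.
split=> [clP A B nA nB|HP M /nbhs_prodP[A [B [nA nB AB]]]].
  by have [p [Pp [Ap Bp]]] := clP _ (nbhs_setX nA nB); exists p.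
by have [p [Pp Ap Bp]] := HP A B nA nB; exists p; split=> //; exact: AB.
Qed.

Lemma continuous_fst : continuous (@fst U V).
Proof. by move=> [x y]; exact: cvg_fst. Qed.

Lemma continuous_snd : continuous (@snd U V).
Proof. by move=> [x y]; exact: cvg_snd. Qed.

Lemma continuous_pair {W : topologicalType} (f : W -> U) (g : W -> V) :
  continuous f -> continuous g -> continuous (fun w => (f w, g w)).
Proof. by move=> cf cg w; apply: cvg_pair; [exact: cf|exact: cg]. Qed.

Lemma prod_hausdorff : hausdorff_space U -> hausdorff_space V ->
  hausdorff_space (U * V)%type.
Proof.
move=> hU hV [x1 x2] [y1 y2] cl; congr (_, _).
  apply: hU => A B nA nB.
  have [[z1 z2] [[/= ? _] [/= ? _]]] :=
    cl _ _ (nbhs_setX nA (filterT : nbhs x2 setT))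
      (nbhs_setX nB (filterT : nbhs y2 setT)).
  by exists z1.
apply: hV => A B nA nB.
have [[z1 z2] [[/= _ ?] [/= _ ?]]] :=
  cl _ _ (nbhs_setX (filterT : nbhs x1 setT) nA) (nbhs_setX (filterT : nbhs y1 setT) nB).
by exists z2.
Qed.

End ProductTopology.

Lemma closure_swap {U V : topologicalType} (P : set (U * V)) x y :
  closure P (x, y) <-> closure [set q : V * U | P (q.2, q.1)] (y, x).
Proof.
by split=> /closure_prodP clP; apply/closure_prodP => B A nB nA;
  have [[p1 p2] [Pp Ap Bp]] := clP A B nA nB; exists (p2, p1).
Qed.

Lemma continuous_inj_hausdorff {U V : topologicalType} (f : U -> V) :
  continuous f -> injective f -> hausdorff_space V -> hausdorff_space U.
Proof.
move=> cf fi hV p q cl; apply: fi; apply: hV => A B nA nB.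
by have [z [Az Bz]] := cl _ _ (cf p _ nA) (cf q _ nB); exists (f z).
Qed.

Lemma continuous_sheetwise {U Z : topologicalType} (h : U * Label -> Z) :
  (forall t, continuous (fun x => h (x, t))) -> continuous h.
Proof.
move=> ch [x t] C nC.
have nt : nbhs t [set t] by rewrite Label_discrete.
by apply: filterS (nbhs_setX (ch t x _ nC) nt) => -[x' t'] /= [H ->].
Qed.

Lemma continuous_locally_constant {U Z : topologicalType} (g : U -> Z) :
  (forall x, nbhs x [set x' | g x' = g x]) -> continuous g.
Proof.
by move=> h x C /nbhs_singleton Cg; apply: filterS (h x) => x' /= ->.
Qed.

Section NormalSubspace.
Context {Z : topologicalType}.

Lemma nbhs_subspace_in {S : set Z} {z : Z} {P : set Z} : S z -> nbhs z P ->
  nbhs (z : subspace S) (P `&` S).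
Proof.
move=> Sz nP; case: (nbhs_subspaceP S z) => // _.
by rewrite withinE; exists P => //; rewrite -setIA setIid.
Qed.

Lemma nbhs_subspace_out {S : set Z} {z : Z} : ~ S z -> nbhs (z : subspace S) [set z].
Proof. by move=> nSz; case: (nbhs_subspaceP S z) => // _ y. Qed.

(* Normality of the subspace [S], expressed with open sets of the ambient space. *)
Definition separated_in (S : set Z) := forall A B : set Z,
  A `<=` S -> B `<=` S -> closure A `&` S `<=` A -> closure B `&` S `<=` B ->
  A `&` B = set0 ->
  exists U V, [/\ open U, open V, A `<=` U, B `<=` V & U `&` V `&` S = set0].

Lemma separated_in_normal {S : set Z} :
  separated_in S -> normal_space (subspace S).
Proof.
move=> Hsep C cC N /set_nbhsP [O [oO CO ON]].
have [V0 oV0 V0S] := (open_subspaceP S O).1 oO.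
have [K cK KS] := (closed_subspaceP S C).1 cC.
have [U [V [oU oV CU BV UV]]] :
    exists U V : set Z, [/\ open U, open V, C `&` S `<=` U, S `&` ~` V0 `<=` V &
                    U `&` V `&` S = set0].
  apply: (Hsep (C `&` S) (S `&` ~` V0)) => [z []//|z []//|z [clz Sz]|z [clz Sz]|].
  - suff Kz : K z by have : (K `&` S) z by []; rewrite KS.
    rewrite (closure_id K).1 //; apply: closureS clz => y [Cy Sy].
    by have : (C `&` S) y by []; rewrite -KS => -[].
  - split=> //; rewrite (closure_id (~` V0)).1 ?closedC //.
    by apply: closureS clz => y [].
  - apply/seteqP; split=> // z [[Cz Sz] [_ nV0z]]; apply: nV0z.
    have : (O `&` S) z by split=> //; exact: CO.
    by rewrite -V0S => -[].
exists ((U `&` S) `|` (C `&` ~` S)).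
  apply/set_nbhsP; exists ((U `&` S) `|` (C `&` ~` S)); split=> //.
    apply: openU; first by apply/open_subspaceP; exists U; rewrite // -setIA setIid.
    by apply: open_subspace_out => z [].
  by move=> z Cz; have [Sz|nSz] := pselect (S z); [left; split=> //; exact: CU|right].
move=> z clz; apply: contrapT => nNz; have nOz : ~ O z by move/ON.
have [Sz|nSz] := pselect (S z).
  have Vz : V z.
    apply: BV; split=> // V0z; apply: nOz.
    by have : (V0 `&` S) z by []; rewrite V0S => -[].
  have [y [[[Uy Sy]|[_ nSy]] [Vy Sy']]] :=
    clz _ (nbhs_subspace_in Sz (open_nbhs_nbhs (conj oV Vz))).
    by have : (U `&` V `&` S) y by []; rewrite UV.
  exact: nSy.
have [y [[[_ Sy]|[Cy _]] /= yz]] := clz _ (nbhs_subspace_out nSz).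
  by apply: nSz; rewrite -yz.
by apply: nNz; apply: ON; apply: CO; rewrite -yz.
Qed.

Lemma separated_inU (S O1 O2 : set Z) : open O1 -> open O2 ->
  S `<=` O1 `|` O2 -> S `&` O1 `&` O2 = set0 ->
  separated_in (S `&` O1) -> separated_in (S `&` O2) -> separated_in S.
Proof.
move=> oO1 oO2 SO SO12 sep1 sep2 A B AS BS clA clB AB.
have piece (O : set Z) : separated_in (S `&` O) -> exists U V, [/\ open U, open V,
    A `&` O `<=` U, B `&` O `<=` V & U `&` V `&` (S `&` O) = set0].
  move=> sep; apply: sep => [z [/AS]|z [/BS]|z [clz [Sz Oz]]|z [clz [Sz Oz]]|] //.
  - by split=> //; apply: clA; split=> //; apply: closureS clz => y [].
  - by split=> //; apply: clB; split=> //; apply: closureS clz => y [].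
  - apply/seteqP; split=> // z [[Az _] [Bz _]].
    by have : (A `&` B) z by []; rewrite AB.
have [U1 [V1 [oU1 oV1 AU1 BV1 UV1]]] := piece O1 sep1.
have [U2 [V2 [oU2 oV2 AU2 BV2 UV2]]] := piece O2 sep2.
exists ((U1 `&` O1) `|` (U2 `&` O2)), ((V1 `&` O1) `|` (V2 `&` O2)).
split; [by apply: openU; apply: openI..| | |].
- by move=> z Az; case: (SO _ (AS _ Az)) => Oz; [left|right]; split=> //;
    [apply: AU1|apply: AU2].
- by move=> z Bz; case: (SO _ (BS _ Bz)) => Oz; [left|right]; split=> //;
    [apply: BV1|apply: BV2].
apply/seteqP; split=> // z [[[[Uz O1z]|[Uz O2z]] [[Vz O1z']|[Vz O2z']]] Sz].
- by rewrite -UV1.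
- by rewrite -SO12.
- by rewrite -SO12.
- by rewrite -UV2.
Qed.

Definition closure_meet_in (S : set Z) := forall A B : set Z,
  A `<=` S -> B `<=` S -> closure A `&` closure B !=set0 ->
  closure A `&` closure B `&` S !=set0.

Lemma closure_meet_separated_in {S : set Z} :
  hausdorff_space Z -> compact [set: Z] -> closure_meet_in S -> separated_in S.
Proof.
move=> hZ cZ meet A B AS BS clA clB AB.
have clAB : closure A `&` closure B = set0.
  apply: contrapT => /eqP/set0P/(meet _ _ AS BS)[z [[clAz clBz] Sz]].
  have : (A `&` B) z by split; [apply: clA|apply: clB].
  by rewrite AB.
have sN : set_nbhs (closure A) (~` closure B).
  apply/set_nbhsP; exists (~` closure B); split=> //.
    exact/closed_openC/closed_closure.
  by move=> z clAz clBz; have : (closure A `&` closure B) z by []; rewrite clAB.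
have [W /set_nbhsP [O [oO AO OW]] clW] :=
  compact_normal hZ cZ (@closed_closure _ A) sN.
exists O, (~` closure W); split.
- exact: oO.
- exact/closed_openC/closed_closure.
- by move=> z /subset_closure; apply: AO.
- by move=> z /subset_closure Bz /clW.
- by apply/seteqP; split=> // z [[/OW/subset_closure]].
Qed.

End NormalSubspace.

Lemma closure_meet_in_swap {U : topologicalType} (S : set (U * U)) :
  closure_meet_in S -> closure_meet_in [set p | S (p.2, p.1)].
Proof.
move=> meet A B AS BS [[x y] [/closure_swap clA /closure_swap clB]].
have AS' : [set q | A (q.2, q.1)] `<=` S by move=> [q1 q2] /AS.
have BS' : [set q | B (q.2, q.1)] `<=` S by move=> [q1 q2] /BS.
have [[x' y'] [[clA' clB'] Sz]] :=
  meet _ _ AS' BS' (ex_intro _ (y, x) (conj clA clB)).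
by exists (y', x'); split; [split; apply/closure_swap|].
Qed.

Lemma label_cases (t : Label) : [\/ t = lbullet, t = lup | t = ldown].
Proof.
by case: t => [[|[|[|//]]] Ht]; [constructor 1|constructor 2|constructor 3];
  apply: val_inj.
Qed.

Lemma Label_compact : compact [set: Label].
Proof. exact/finite_compact/finite_finset. Qed.

Section Quotient.
Context {d : Order.disp_t} {T : orderTopologicalType d} {Omega : T}.
Local Notation Y := (Ysp Omega).
Local Notation nf := (nf Omega).

Lemma nfE (a b : T) (t : Label) : nf ((a, b), t) =
  ((a, b), if ((a == Omega) && (b == Omega)) || ((a == Omega) && (t == lup)) ||
              ((b == Omega) && (t == ldown)) then lbullet else t).
Proof.
by rewrite /Defs.nf; case: (a == Omega); case: (b == Omega);
  case: (t == lup); case: (t == ldown).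
Qed.

Lemma nf_fst p : (nf p).1 = p.1.
Proof. by case: p => [[a b] t]; rewrite nfE. Qed.

Lemma pi_eqP (p q : Xsp T * Label) : \pi_Y p = \pi_Y q <-> nf p = nf q.
Proof. by split=> [/eqquotP/eqP //|/eqP pq]; apply/eqquotP. Qed.

Lemma nf_repr p : nf (repr (\pi_Y p)) = nf p.
Proof. by apply/pi_eqP; rewrite reprK. Qed.

Lemma piY_pi p : piY (\pi_Y p) = p.1.
Proof. by rewrite /piY -(nf_fst (repr _)) nf_repr nf_fst. Qed.

Lemma fiberP (x : Xsp T) (y : Y) :
  fiber Omega x y <-> exists t, y = \pi_Y (x, t).
Proof.
split=> [|[t ->]]; last by rewrite /fiber /= piY_pi.
rewrite /fiber /= /piY => <-; exists (repr y).2.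
by rewrite -surjective_pairing reprK.
Qed.

Lemma piY_continuous : continuous (@piY d T Omega).
Proof.
apply/quotient_continuous.
have -> : piY \o \pi_Y = fst by apply: funext => p /=; rewrite piY_pi.
exact: continuous_fst.
Qed.

Lemma piY_open (U : set Y) : open U -> open (piY @` U).
Proof.
move=> oU; have -> : piY @` U = fst @` (\pi_Y @^-1` U).
  apply/seteqP; split=> x [y Uy <-].
    by exists (repr y); rewrite //= reprK.
  by exists (\pi_Y y); rewrite ?piY_pi.
exact: fst_open.
Qed.

Lemma piY_surjective (x : Xsp T) : exists y : Y, piY y = x.
Proof. by exists (\pi_Y (x, lbullet)); rewrite piY_pi. Qed.

Lemma Y_compact : compact [set: T] -> compact [set: Y].
Proof.
move=> cT; have -> : [set: Y] = \pi_Y @` setT.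
  by apply/seteqP; split=> // y _; exists (repr y); rewrite ?reprK.
apply: continuous_compact; first exact/continuous_subspaceT/pi_continuous.
by rewrite -!setXTT; apply: compact_setX; [apply: compact_setX|exact: Label_compact].
Qed.

(* The point of the sheet [t] over [x] is recorded as the pair
   [(x, glue_point t x)]; this embeds [Y] into [X * X]. *)
Definition glue_point (t : Label) (x : Xsp T) : Xsp T :=
  if t == lup then (x.1, Omega) else if t == ldown then (Omega, x.2)
  else (Omega, Omega).

Definition embed (p : Xsp T * Label) : Xsp T * Xsp T := (p.1, glue_point p.2 p.1).

Lemma embed_nf p : embed (nf p) = embed p.
Proof.
case: p => [[a b] t]; rewrite nfE /embed /glue_point /=.
by case: (label_cases t) => ->; case: (eqVneq a Omega) => [->|];
  case: (eqVneq b Omega) => [->|] //=; rewrite ?eqxx ?andbT ?andbF.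
Qed.

Lemma embed_inj p q : embed p = embed q -> nf p = nf q.
Proof.
case: p q => [[a b] t] [[a' b'] t']; rewrite /embed /glue_point !nfE /= => -[<- <-].
by case: (label_cases t) => ->; case: (label_cases t') => ->; rewrite ?eqxx //=;
  move=> [] //; (try move=> ->); (try move=> ->); rewrite ?eqxx ?andbT ?orbT ?if_same.
Qed.

Lemma embed_continuous : continuous embed.
Proof.
apply: continuous_sheetwise => t; apply: continuous_pair => [x|]; first exact: cvg_id.
rewrite /glue_point /=; case: (label_cases t) => -> /=.
- exact: cst_continuous.
- by apply: continuous_pair; [exact: continuous_fst|exact: cst_continuous].
- by apply: continuous_pair; [exact: cst_continuous|exact: continuous_snd].
Qed.

Lemma Y_hausdorff : hausdorff_space Y.
Proof.
pose embY (y : Y) := embed (repr y).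
have embY_pi p : embY (\pi_Y p) = embed p by rewrite /embY -embed_nf nf_repr embed_nf.
apply: (@continuous_inj_hausdorff Y (Xsp T * Xsp T)%type embY).
- apply/quotient_continuous.
  have -> : embY \o \pi_Y = embed by apply: funext => p /=; rewrite embY_pi.
  exact: embed_continuous.
- by move=> y1 y2 /embed_inj/pi_eqP; rewrite !reprK.
- by do 2![apply: prod_hausdorff]; exact: order_hausdorff.
Qed.

End Quotient.

Section Fibers.
Context {d : Order.disp_t} {T : orderTopologicalType d} {Omega : T}.
Local Notation Y := (Ysp Omega).
Local Notation nf := (nf Omega).

Lemma fiber_image (x : Xsp T) :
  fiber Omega x = (fun t => \pi_Y (x, t)) @` [set: Label].
Proof.
apply/seteqP; split=> y; first by case/fiberP=> t ->; exists t.
by case=> t _ <-; apply/fiberP; exists t.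
Qed.

Lemma fiber_finite (x : Xsp T) : finite_set (fiber Omega x).
Proof. by rewrite fiber_image; apply/finite_image/finite_finset. Qed.

Lemma fiber_card_le3 (x : Xsp T) : (fiber Omega x #<= `I_3)%card.
Proof.
rewrite fiber_image; apply: card_le_trans (card_image_le _ _) _.
by have /card_eqPle[] := card_esym (@card_II 3).
Qed.

Lemma fiber_card (x : Xsp T) (lab : nat -> Label) n :
  (forall t, exists2 k, (k < n)%N & nf (x, t) = nf (x, lab k)) ->
  (forall k k', (k < n)%N -> (k' < n)%N -> nf (x, lab k) = nf (x, lab k') -> k = k') ->
  (fiber Omega x #= `I_n)%card.
Proof.
move=> onto inj; have -> : fiber Omega x = (fun k => \pi_Y (x, lab k)) @` `I_n.
  apply/seteqP; split=> y.
    by case/fiberP=> t ->; have [k kn e] := onto t; exists k => //; apply/pi_eqP.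
  by case=> k _ <-; apply/fiberP; exists (lab k).
by apply: inj_card_eq => k k'; rewrite !inE /= => kn k'n /pi_eqP; apply: inj.
Qed.

Lemma fiber_card1 : (fiber Omega (Omega, Omega) #= `I_1)%card.
Proof.
apply: (fiber_card _ (fun _ => lbullet)); last by move=> [|] [|].
by move=> t; exists 0%N => //; rewrite !nfE eqxx.
Qed.

Lemma fiber_card2 (x : Xsp T) : stratum2 Omega x -> (fiber Omega x #= `I_2)%card.
Proof.
case: x => a b [[/= -> bO]|[/= aO ->]].
  have bO' : (b == Omega) = false by rewrite lt_eqF.
  apply: (fiber_card _ (fun k => if k == 0%N then lbullet else ldown)).
    move=> t; case: (label_cases t) => ->; [exists 0%N|exists 0%N|exists 1%N] => //;
    by rewrite !nfE eqxx bO'.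
  move=> k k' kn k'n; rewrite !nfE eqxx bO' /= => -[].
  by case: k k' kn k'n => [|[|]] [|[|]].
have aO' : (a == Omega) = false by rewrite lt_eqF.
apply: (fiber_card _ (fun k => if k == 0%N then lbullet else lup)).
  move=> t; case: (label_cases t) => ->; [exists 0%N|exists 1%N|exists 0%N] => //;
  by rewrite !nfE eqxx aO'.
move=> k k' kn k'n; rewrite !nfE eqxx aO' /= => -[].
by case: k k' kn k'n => [|[|]] [|[|]].
Qed.

Lemma nf_stratum3 (x : Xsp T) t : stratum3 Omega x -> nf (x, t) = (x, t).
Proof. by case: x => a b [/= /lt_eqF aO /lt_eqF bO]; rewrite aO bO. Qed.

Lemma fiber_card3 (x : Xsp T) : stratum3 Omega x -> (fiber Omega x #= `I_3)%card.
Proof.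
move=> x3; pose lab k := if k == 0%N then lbullet else if k == 1%N then lup else ldown.
apply: (fiber_card _ lab).
  by move=> t; case: (label_cases t) => ->; [exists 0%N|exists 1%N|exists 2%N].
move=> k k' kn k'n; rewrite !nf_stratum3 // => -[].
by case: k k' kn k'n => [|[|[|]]] [|[|[|]]].
Qed.

Lemma fsbig_fiber1 {R : realType} (F : Y -> R) (x : Xsp T) y0 : fiber Omega x y0 ->
  (forall y, fiber Omega x y -> y <> y0 -> F y = 0) ->
  \sum_(y \in fiber Omega x) F y = F y0.
Proof.
move=> xy0 F0; rewrite (fsbigD1 y0) //; last exact: fiber_finite.
by rewrite fsbig1 ?Monoid.mulm1 // => y [xy /F0]; apply.
Qed.

Lemma fsbig_fiber3 {R : realType} (F : Y -> R) (x : Xsp T) : stratum3 Omega x ->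
  \sum_(y \in fiber Omega x) F y =
  F (\pi_Y (x, lbullet)) + (F (\pi_Y (x, lup)) + F (\pi_Y (x, ldown))).
Proof.
move=> x3; rewrite fiber_image fsbig_image; last first.
  by move=> t t' _ _ /pi_eqP; rewrite !nf_stratum3 // => -[].
have fin : finite_set [set: Label] by apply: finite_finset.
rewrite (fsbigD1 lbullet) // (fsbigD1 lup) //; last exact: finite_setD.
rewrite (fsbigD1 ldown) //; last by do 2!apply: finite_setD.
rewrite fsbig1 ?Monoid.mulm1 // => t [[[_ n1] n2] n3].
by case: (label_cases t) => et; [case: n1|case: n2|case: n3].
Qed.

End Fibers.

Section OrderTopology.
Context {d : Order.disp_t} {T : orderTopologicalType d}.
Local Open Scope order_scope.

Lemma nbhs_left_cases {x : T} {N : set T} : nbhs x N ->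
  (exists2 c, c < x & forall y, c < y -> y <= x -> N y) \/
  (forall y, y <= x -> N y).
Proof.
rewrite itv_nbhsE => -[[l r] [oi xi] sub].
have lN y : l <= BLeft y -> y <= x -> N y.
  move=> ly yx; apply: sub => /=; rewrite itv_boundlr ly /=.
  move: xi; rewrite itv_boundlr => /andP[_]; apply: le_trans; by rewrite bnd_simp.
move: oi xi lN {sub}; case: l => [[] a|[]] //= _ xi lN; last by right=> y; apply: lN.
left; exists a => [|y ay]; last by apply: lN; rewrite bnd_simp.
by move: xi; rewrite itv_boundlr bnd_simp => /andP[].
Qed.

Lemma nbhs_left_itv {x y0 : T} {N : set T} : y0 < x -> nbhs x N ->
  exists2 c, c < x & forall y, c < y -> y <= x -> N y.
Proof. by move=> y0x /nbhs_left_cases[//|lN]; exists y0 => // y _; apply: lN. Qed.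

Lemma nbhs_ray {eta x : T} : eta < x -> nbhs x [set y | eta < y].
Proof.
move=> ex; apply: open_nbhs_nbhs; split=> //.
have -> : [set y | eta < y] = `]eta, +oo[%classic.
  by apply/seteqP; split=> y /=; rewrite in_itv /= andbT.
exact: rray_open.
Qed.

End OrderTopology.

Lemma norm_lt_eq0 {R : realType} (r : R) : (forall e, 0 < e -> `|r| < e) -> r = 0.
Proof.
move=> h; apply/eqP; apply: contraT => r0.
by have := h `|r|; rewrite normr_gt0 ltxx => /(_ r0).
Qed.

Lemma norm_lt_invS_eq0 {R : realType} (r : R) : (forall k, `|r| < k.+1%:R^-1) -> r = 0.
Proof.
move=> h; apply: norm_lt_eq0 => e e0; apply: lt_trans (h (Num.truncn e^-1)) _.
by rewrite invf_plt ?posrE ?ltr0Sn // truncnS_gt.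
Qed.

Lemma countableU {U : Type} (A B : set U) :
  countable A -> countable B -> countable (A `|` B).
Proof.
move=> cA cB; have AB : A `|` B `<=` \bigcup_(i in [set: bool]) (if i then A else B).
  by move=> y [Ay|By]; [exists true|exists false].
apply: sub_countable (subset_card_le AB) _.
by apply: bigcup_countable; [exact: countableP|case].
Qed.

Section FirstUncountable.
Context {d : Order.disp_t} {T : orderTopologicalType d} {Omega : T}.
Hypothesis hmax : forall a : T, (a <= Omega)%O.
Hypothesis hwo :
  forall A : set T, A !=set0 -> exists2 a, A a & forall b, A b -> (a <= b)%O.
Hypothesis hcount :
  forall a : T, (a < Omega)%O -> countable [set b : T | (b < a)%O].
Hypothesis hunc : ~ countable [set b : T | (b < Omega)%O].
Local Open Scope order_scope.

Lemma countable_le (x : T) : x < Omega -> countable [set y | y <= x].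
Proof.
move=> xO; apply: (@sub_countable _ _ _ ([set y | y < x] `|` [set x])).
  by apply: subset_card_le => y /=; rewrite le_eqVlt => /orP[/eqP->|]; [right|left].
by apply: countableU; [exact: hcount|exact: countable1].
Qed.

Lemma countable_bounded {S : set T} : countable S -> S `<=` [set b | b < Omega] ->
  exists2 b, b < Omega & forall s, S s -> s < b.
Proof.
move=> cS SO; apply: contrapT => nb; apply: hunc.
have sub : [set b | b < Omega] `<=` \bigcup_(s in S) [set y | y <= s].
  move=> b bO; apply: contrapT => nin; apply: nb; exists b => // s Ss.
  by rewrite ltNge; apply/negP => sb; apply: nin; exists s.
apply: sub_countable (subset_card_le sub) _.
by apply: bigcup_countable => // s /SO; apply: countable_le.
Qed.

Lemma exists_lt_Omega : exists w0 : T, w0 < Omega.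
Proof.
apply: contrapT => nw; apply: hunc; suff -> : [set b : T | b < Omega] = set0 by [].
by apply/seteqP; split=> // b bO; apply: nw; exists b.
Qed.

Lemma open_le {x : T} : x < Omega -> open [set y | y <= x].
Proof.
move=> xO; have [|s xs smin] := hwo [set y | x < y]; first by exists Omega.
suff -> : [set y | y <= x] = `]-oo, s[%classic by exact: lray_open.
apply/seteqP; split=> y; rewrite /= in_itv /=.
  by move=> yx; apply: le_lt_trans xs.
by move=> ys; rewrite leNgt; apply/negP => /smin; rewrite leNgt ys.
Qed.

Lemma nbhs_le {x : T} : x < Omega -> nbhs x [set y | y <= x].
Proof. by move=> xO; apply: open_nbhs_nbhs; split; [exact: open_le|exact: lexx]. Qed.

Lemma open_lt_Omega : open [set y : T | y < Omega].
Proof.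
have -> : [set y : T | y < Omega] = `]-oo, Omega[%classic.
  by apply/seteqP; split=> y; rewrite /= in_itv.
exact: lray_open.
Qed.

Lemma lub_ex (B : set T) : exists c,
  (forall b, B b -> b <= c) /\ (forall c', (forall b, B b -> b <= c') -> c <= c').
Proof.
have [|c ub cmin] := hwo [set c | forall b, B b -> b <= c]; first by exists Omega.
by exists c.
Qed.

Definition lub (B : set T) : T := projT1 (cid (lub_ex B)).

Lemma lub_ub B b : B b -> b <= lub B.
Proof. by move=> Bb; have [+ _] := projT2 (cid (lub_ex B)); apply. Qed.

Lemma lub_min B c : (forall b, B b -> b <= c) -> lub B <= c.
Proof. by have [_ +] := projT2 (cid (lub_ex B)); apply. Qed.

Lemma lub_approx {B e} : e < lub B -> exists2 b, B b & e < b.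
Proof.
move=> elub; apply: contrapT => nb; move: elub; apply/negP; rewrite -leNgt.
by apply: lub_min => b Bb; rewrite leNgt; apply/negP => eb; apply: nb; exists b.
Qed.

(* A cluster point of a proper filter [F] is the least of the [lub B], [F B]. *)
Lemma T_compact : compact [set: T].
Proof.
move=> F PF _.
have [|p [B0 FB0 ->] pmin] := hwo [set p | exists2 B, F B & p = lub B].
  by exists (lub setT), setT => //; exact: filterT.
exists (lub B0); split=> // B N FB Np.
have eqL : lub (B `&` B0) = lub B0.
  apply: le_anti; apply/andP; split; first by apply: lub_min => b [_ /lub_ub].
  by apply: pmin; exists (B `&` B0) => //; apply: filterI.
case: (nbhs_left_cases Np) => [[c cL sub]|sub].
  rewrite -eqL in cL; have [b Bb cb] := lub_approx cL.
  exists b; split; first by case: Bb.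
  by apply: sub => //; rewrite -eqL; apply: lub_ub.
have [b Bb] := filter_ex (filterI FB FB0); exists b; split; first by case: Bb.
by apply: sub; rewrite -eqL; exact: lub_ub.
Qed.

(* The closing-off argument: iterate a choice of [xi] serving all the
   countably many requirements at once, and take the supremum. *)
Lemma closing_off {I : countType} (P : I -> T -> T -> Prop) :
  (forall i eta, eta < Omega -> exists2 xi, xi < Omega & P i eta xi) ->
  exists2 gam, gam < Omega & (exists d, d < gam) /\
    forall i d, d < gam ->
      exists eta xi, [/\ d < eta < gam, xi <= gam & P i eta xi].
Proof.
move=> hP.
have next_ex eta : exists nx, eta < Omega ->
    [/\ eta < nx, nx < Omega & forall i, exists2 xi, xi <= nx & P i eta xi].
  have [eO|] := pselect (eta < Omega); last by exists Omega.
  have /choice[xi hxi] : forall i, exists xi, xi < Omega /\ P i eta xi.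
    by move=> i; have [xi ? ?] := hP i eta eO; exists xi.
  have cS : countable ([set eta] `|` range xi).
    apply: countableU; first exact: countable1.
    exact: sub_countable (card_image_le _ _) (countableP _).
  have [|b bO hb] := countable_bounded cS.
    by move=> _ [->|[i _ <-]] //; case: (hxi i).
  exists b => _; split=> // [|i]; first by apply: hb; left.
  by exists (xi i); [apply/ltW/hb; right; exists i|case: (hxi i)].
have /choice[nx hnx] := next_ex; have [w0 w0O] := exists_lt_Omega.
pose g k := iter k nx w0.
have gO k : g k < Omega by elim: k => //= k IH; have [] := hnx _ IH.
have [|b bO gb] :=
  countable_bounded (sub_countable (card_image_le g setT) (countableP _)).
  by move=> _ [k _ <-]; apply: gO.
have g_lub k : g k <= lub (range g) by apply: lub_ub; exists k.
exists (lub (range g)).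
  by apply: le_lt_trans bO; apply: lub_min => _ [k _ <-]; apply/ltW/gb; exists k.
split=> [|i e /lub_approx[_ [k _ <-] ek]].
  by exists (g 0%N); have [g01 _ _] := hnx _ (gO 0%N); apply: lt_le_trans g01 (g_lub 1%N).
have [gkS _ /(_ i)[xi xig Pxi]] := hnx _ (gO k).
exists (g k), xi; split=> //; last exact: le_trans xig (g_lub k.+1).
by rewrite ek; apply: lt_le_trans gkS (g_lub k.+1).
Qed.

Lemma nbhs_countable_base {a : T} : a < Omega -> exists N : nat -> set T,
  (forall k, nbhs a (N k)) /\ forall M, nbhs a M -> exists k, N k `<=` M.
Proof.
move=> aO; have nle := nbhs_le aO.
have [[c ca]|nc] := pselect (exists c, c < a); last first.
  exists (fun _ => [set y | y <= a]); split=> // M /nbhs_left_cases[[c ca _]|sub].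
    by case: nc; exists c.
  by exists 0%N.
have /pfcard_geP[e0|/surjfunPex[e eE]] := hcount _ aO.
  by have : [set b | b < a] c by []; rewrite e0.
have ea k : e k < a by have : [set b | b < a] (e k) by rewrite eE; exists k.
exists (fun k => [set y | y <= a /\ forall j, (j <= k)%N -> e j < y]); split.
  elim=> [|k IH].
    by apply: filterS (filterI nle (nbhs_ray (ea 0%N))) => y [ya ey]; split=> // [[]].
  apply: filterS (filterI IH (nbhs_ray (ea k.+1))) => y [[ya hy] ey]; split=> // j.
  by rewrite leq_eqVlt => /orP[/eqP->//|/hy].
move=> M /nbhs_left_cases[[c' c'a sub]|sub]; last by exists 0%N => y [/sub].
have : [set b | b < a] c' by [].
rewrite eE => -[k _ ekc]; exists k => y [ya /(_ k (leqnn k))].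
by rewrite ekc => /sub; apply.
Qed.

Local Notation X := (Xsp T).

Lemma X_compact : compact [set: X].
Proof. by rewrite -setXTT; apply: compact_setX; exact: T_compact. Qed.

Lemma X_hausdorff : hausdorff_space X.
Proof. by apply: prod_hausdorff; exact: order_hausdorff. Qed.

Lemma closure_meet_corner {A B : set X} :
  (forall p, (A `|` B) p -> p.1 < Omega /\ p.2 < Omega) ->
  closure A (Omega, Omega) -> closure B (Omega, Omega) ->
  exists2 gam, gam < Omega & closure A (gam, gam) /\ closure B (gam, gam).
Proof.
move=> ABO clA clB.
pose C (s : bool) := if s then A else B.
have CAB s p : C s p -> (A `|` B) p by case: s; [left|right].
have [|gam gO [[d0 d0g] hgam]] := closing_off (fun s eta xi =>
    exists p, [/\ C s p, eta < p.1 <= xi & eta < p.2 <= xi]).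
  move=> s eta eO; have /closure_prodP clC : closure (C s) (Omega, Omega) by case: s.
  have [p [Cp p1 p2]] := clC _ _ (nbhs_ray eO) (nbhs_ray eO).
  have [p1O p2O] := ABO _ (CAB _ _ Cp).
  exists (Order.max p.1 p.2); first by rewrite gt_max p1O p2O.
  by exists p; rewrite p1 p2 !le_max !lexx ?orbT.
have clCgam s : closure (C s) (gam, gam).
  apply/closure_prodP => M1 M2 n1 n2.
  have [c1 c1g s1] := nbhs_left_itv d0g n1; have [c2 c2g s2] := nbhs_left_itv d0g n2.
  have [|eta [xi [/andP[ceta _] xig [p [Cp /andP[p1 p1'] /andP[p2 p2']]]]]] :=
    hgam s (Order.max c1 c2); first by rewrite gt_max c1g c2g.
  move: ceta; rewrite gt_max => /andP[c1e c2e].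
  exists p; split=> //; [apply: s1|apply: s2];
    by [apply: lt_trans p1 | apply: lt_trans p2 | apply: le_trans xig].
by exists gam => //; split; [exact: (clCgam true)|exact: (clCgam false)].
Qed.

Lemma closure_meet_edge {A B : set X} {b : T} {N : nat -> set T} :
  (forall p, (A `|` B) p -> p.1 < Omega) ->
  (forall k, exists2 M, nbhs b M & forall p, (A `|` B) p -> M p.2 -> N k p.2) ->
  (forall M, nbhs b M -> exists k, N k `<=` M) ->
  closure A (Omega, b) -> closure B (Omega, b) ->
  exists2 gam, gam < Omega & closure A (gam, b) /\ closure B (gam, b).
Proof.
move=> ABO hN Nbase clA clB.
pose C (s : bool) := if s then A else B.
have CAB s p : C s p -> (A `|` B) p by case: s; [left|right].
have [|gam gO [[d0 d0g] hgam]] := closing_off (fun (ks : nat * bool) eta xi =>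
    exists p, [/\ C ks.2 p, eta < p.1 <= xi & N ks.1 p.2]).
  move=> [k s] eta eO; have /closure_prodP clC : closure (C s) (Omega, b) by case: s.
  have [M nM MN] := hN k.
  have [p [Cp p1 p2]] := clC _ _ (nbhs_ray eO) nM.
  exists p.1; first exact/ABO/(CAB s).
  by exists p; rewrite p1 lexx; split=> //; apply/MN/p2/(CAB s).
have clCgam s : closure (C s) (gam, b).
  apply/closure_prodP => M1 M2 n1 n2.
  have [c cg sub] := nbhs_left_itv d0g n1; have [k Nk] := Nbase _ n2.
  have [eta [xi [/andP[ceta _] xig [p [Cp /andP[p1 p1'] p2]]]]] := hgam (k, s) c cg.
  exists p; split=> //; last exact: Nk.
  by apply: sub; [apply: lt_trans p1|apply: le_trans xig].
by exists gam => //; split; [exact: (clCgam true)|exact: (clCgam false)].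
Qed.

Lemma stratum3_closure_meet : closure_meet_in (stratum3 Omega).
Proof.
move=> A B AS BS [[a b] [clA clB]].
have ABO p : (A `|` B) p -> p.1 < Omega /\ p.2 < Omega by case=> [/AS|/BS].
have base_nbhs (N : nat -> set T) (c : T) (C : set X) : (forall k, nbhs c (N k)) ->
    forall k, exists2 M, nbhs c M & forall p, C p -> M p.2 -> N k p.2.
  by move=> nN k; exists (N k).
have := hmax a; rewrite le_eqVlt => /orP[/eqP ea|aO];
  have := hmax b; rewrite le_eqVlt => /orP[/eqP eb|bO]; subst.
- have [gam gO [clA' clB']] := closure_meet_corner ABO clA clB.
  by exists (gam, gam).
- have [N [nN Nbase]] := nbhs_countable_base bO.
  have [gam gO [clA' clB']] := closure_meet_edge (fun p ABp => (ABO p ABp).1)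
    (base_nbhs _ _ _ nN) Nbase clA clB.
  by exists (gam, b).
- have [N [nN Nbase]] := nbhs_countable_base aO.
  have [gam gO [clA' clB']] := closure_meet_edge
    (fun p ABp => (ABO (p.2, p.1) ABp).2) (base_nbhs _ _ _ nN) Nbase
    ((closure_swap _ _ _).1 clA) ((closure_swap _ _ _).1 clB).
  by exists (a, gam); split; [split; apply/closure_swap|].
- by exists (a, b).
Qed.

Lemma stratum1_closure_meet : closure_meet_in (stratum1 Omega).
Proof.
move=> A B AS BS [z [clA clB]].
have corner C : C `<=` stratum1 Omega -> closure C z -> C (Omega, Omega).
  move=> CS clC; have [p Cp] : C !=set0.
    by apply/set0P/eqP => C0; move: clC; rewrite C0 closure0.
  by rewrite -(CS _ Cp).
exists (Omega, Omega); split; [split|by []]; apply: subset_closure.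
  exact: corner AS clA.
exact: corner BS clB.
Qed.

Lemma stratum2_edge_closure_meet :
  closure_meet_in (stratum2 Omega `&` [set p | p.1 < Omega]).
Proof.
move=> A B AS BS [[a b] [clA clB]].
have ABp p : (A `|` B) p -> p.1 < Omega /\ p.2 = Omega.
  by case=> [/AS|/BS] [[[p1 _]|[? ?]] //=]; rewrite p1 ltxx.
have eb : b = Omega.
  apply/eqP; rewrite eq_le hmax leNgt; apply/negP => bO.
  have [p [Ap _ pb]] := (closure_prodP _ _ _).1 clA _ _ filterT (nbhs_le bO).
  by move: pb; rewrite /= (ABp p (or_introl Ap)).2 leNgt bO.
subst b; have := hmax a; rewrite le_eqVlt => /orP[/eqP ea|aO]; last first.
  by exists (a, Omega); split=> //; split=> //; right.
have hN (k : nat) : exists2 M, nbhs Omega M &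
    forall p, (A `|` B) p -> M p.2 -> [set Omega] p.2.
  by exists setT => [|p /ABp[]]; [exact: filterT|].
have Nbase M : nbhs Omega M -> exists k : nat, [set Omega] `<=` M.
  by move=> nM; exists 0%N => _ ->; exact: nbhs_singleton.
subst a; have [gam gO [clA' clB']] :=
  closure_meet_edge (fun p ABp' => (ABp p ABp').1) hN Nbase clA clB.
by exists (gam, Omega); split=> //; split=> //; right.
Qed.

Lemma stratum1_normal : normal_space (subspace (stratum1 Omega)).
Proof.
apply/separated_in_normal/(closure_meet_separated_in X_hausdorff X_compact).
exact: stratum1_closure_meet.
Qed.

Lemma stratum2_normal : normal_space (subspace (stratum2 Omega)).
Proof.
have sep S : closure_meet_in S -> separated_in S :=
  closure_meet_separated_in X_hausdorff X_compact.
apply/separated_in_normal/(@separated_inU _ _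
  [set p : X | p.2 < Omega] [set p : X | p.1 < Omega]).
- exact: (continuousP _).1 continuous_snd _ open_lt_Omega.
- exact: (continuousP _).1 continuous_fst _ open_lt_Omega.
- by move=> p [[_ ?]|[? _]]; [left|right].
- apply/seteqP; split=> // p [[[[p1 _]|[_ p2]] p2O] p1O].
    by move: p1O; rewrite /= p1 ltxx.
  by move: p2O; rewrite /= p2 ltxx.
- set S := (Q in separated_in Q).
  have -> : S = [set p | (stratum2 Omega `&` [set p | p.1 < Omega]) (p.2, p.1)].
    apply/seteqP; split=> -[x y] [h1 h2]; split=> //=.
      by case: h1 => -[? ?]; [right|left].
    by case: h1 => -[? ?]; [right|left].
  by apply: sep; apply: closure_meet_in_swap; exact: stratum2_edge_closure_meet.
- exact/sep/stratum2_edge_closure_meet.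
Qed.

Lemma stratum3_normal : normal_space (subspace (stratum3 Omega)).
Proof.
apply/separated_in_normal/(closure_meet_separated_in X_hausdorff X_compact).
exact: stratum3_closure_meet.
Qed.

Local Notation Y := (Ysp Omega).

(* The sheet [down] ([s = true]) is glued where the second coordinate is
   [Omega], the sheet [up] where the first one is; [tilt s b a] has free
   coordinate [b] and the other, [fixed] coordinate [a]. *)
Definition sheet (s : bool) : Label := if s then ldown else lup.
Definition fixed (s : bool) (x : X) : T := if s then x.2 else x.1.
Definition tilt (s : bool) (b a : T) : X := if s then (b, a) else (a, b).

Lemma fixed_tilt s b a : fixed s (tilt s b a) = a.
Proof. by case: s. Qed.

Lemma fixed_continuous s : continuous (fixed s).
Proof. by case: s; [exact: continuous_snd|exact: continuous_fst]. Qed.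

Lemma stratum2_tilt s a : a < Omega -> stratum2 Omega (tilt s Omega a).
Proof. by case: s => aO; [left|right]. Qed.

Lemma nbhs_tilt s b a (P : set X) : nbhs (tilt s b a) P ->
  exists M1 M2, [/\ nbhs b M1, nbhs a M2 &
    forall b' a', M1 b' -> M2 a' -> P (tilt s b' a')].
Proof.
case: s => /nbhs_prodP[M1 [M2 [n1 n2 sub]]].
  by exists M1, M2; split=> // b' a' ? ?; apply: sub.
by exists M2, M1; split=> // b' a' ? ?; apply: sub.
Qed.

Lemma nf_sheet s (x : X) t : fixed s x < Omega ->
  ((nf Omega (x, t)).2 == sheet s) = (t == sheet s).
Proof.
case: x => a b; case: s => /lt_eqF xO; rewrite nfE /= xO ?andbF /= ?orbF;
  by case: (label_cases t) => ->; case: (_ == Omega).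
Qed.

Section Weights.
Context (R : realType) (w : Y -> R).
Hypothesis w_continuous : forall f : Y -> R, continuous f ->
  continuous (fun x : X => \sum_(y \in fiber Omega x) w y * f y).

(* Test [w] against the indicator of the part of a sheet lying over the
   clopen set [fixed s x <= g]; there the sheet is not glued to the others. *)
Lemma sheet_weight_near s {g : T} {x0 : X} : g < Omega -> fixed s x0 <= g ->
  forall e, 0 < e -> nbhs x0 [set x |
    fixed s x <= g -> `|w (\pi_Y (x, sheet s)) - w (\pi_Y (x0, sheet s))| < e].
Proof.
move=> gO x0g e e0.
pose f (y : Y) : R :=
  if ((nf Omega (repr y)).2 == sheet s) && (fixed s (nf Omega (repr y)).1 <= g)
  then 1 else 0.
have fE p : f (\pi_Y p) = if (p.2 == sheet s) && (fixed s p.1 <= g) then 1 else 0.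
  rewrite /f nf_repr nf_fst; case: (boolP (fixed s p.1 <= g)) => pg.
    by case: p pg => x t pg; rewrite !andbT nf_sheet //; apply: le_lt_trans pg gO.
  by rewrite !andbF.
have f_continuous : continuous f.
  apply/quotient_continuous.
  have -> : f \o \pi_Y = fun p => if (p.2 == sheet s) && (fixed s p.1 <= g) then 1 else 0.
    by apply: funext => p /=; rewrite fE.
  apply: continuous_sheetwise => t; apply: continuous_locally_constant => x /=.
  case: (boolP (fixed s x <= g)) => xg.
    have : nbhs x (fixed s @^-1` [set y | y <= g]).
      exact/fixed_continuous/open_nbhs_nbhs/(conj (open_le gO) xg).
    by apply: filterS => x' /= ->.
  have : nbhs x (fixed s @^-1` [set y | g < y]).
    by apply/fixed_continuous/nbhs_ray; rewrite ltNge.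
  by apply: filterS => x' /= gx'; rewrite leNgt gx' andbF.
have sumE x : fixed s x <= g ->
    \sum_(y \in fiber Omega x) w y * f y = w (\pi_Y (x, sheet s)).
  move=> xg; rewrite (fsbig_fiber1 _ _ (\pi_Y (x, sheet s))).
  - by rewrite fE eqxx xg mulr1.
  - by apply/fiberP; exists (sheet s).
  move=> y /fiberP[t ->] ny; rewrite fE; case: (eqVneq t (sheet s)) => [et|] /=.
    by case: ny; rewrite et.
  by rewrite mulr0.
apply: filterS ((cvgrPdist_lt _ _).1 (w_continuous _ f_continuous x0) e e0).
by move=> x /= + xg; rewrite -sumE // -sumE // distrC.
Qed.

Hypothesis w_stratum2 :
  forall x, stratum2 Omega x -> forall y, fiber Omega x y -> w y = 2^-1.

Lemma weight_tilt_near s (b0 : T) {a0 g : T} : a0 <= g -> g < Omega ->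
  forall e, 0 < e -> exists M1 M2, [/\ nbhs b0 M1, nbhs a0 M2 &
    forall b a, M1 b -> M2 a -> a <= g ->
      `|w (\pi_Y (tilt s b a, sheet s)) - w (\pi_Y (tilt s b0 a0, sheet s))| < e].
Proof.
move=> a0g gO e e0; have tg : fixed s (tilt s b0 a0) <= g by rewrite fixed_tilt.
have /nbhs_tilt[M1 [M2 [n1 n2 sub]]] := sheet_weight_near s gO tg e e0.
by exists M1, M2; split=> // b a M1b M2a ag; apply: sub; rewrite ?fixed_tilt.
Qed.

Lemma weight_eventually_half s {a : T} : a < Omega -> forall e, 0 < e ->
  exists2 c, c < Omega &
    forall b, c < b -> `|w (\pi_Y (tilt s b a, sheet s)) - 2^-1| < e.
Proof.
move=> aO e e0; have [M1 [M2 [n1 n2 sub]]] := weight_tilt_near s Omega (lexx a) aO _ e0.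
have [w0 w0O] := exists_lt_Omega; have [c cO M1c] := nbhs_left_itv w0O n1.
have edge_half : w (\pi_Y (tilt s Omega a, sheet s)) = 2^-1.
  by apply: (w_stratum2 _ (stratum2_tilt s _ aO)); apply/fiberP; exists (sheet s).
exists c => // b cb; rewrite -edge_half.
exact: sub b a (M1c _ cb (hmax b)) (nbhs_singleton n2) (lexx a).
Qed.

Lemma weight_diagonal_half :
  exists2 gam, gam < Omega & forall s, w (\pi_Y ((gam, gam), sheet s)) = 2^-1.
Proof.
have [|gam gO [[d0 d0g] hgam]] := closing_off (fun (k : nat) eta xi =>
    forall s a b, a <= eta -> xi <= b ->
      `|w (\pi_Y (tilt s b a, sheet s)) - 2^-1| < k.+1%:R^-1).
  move=> k eta eO; have e0 : 0 < k.+1%:R^-1 :> R by rewrite invr_gt0 ltr0Sn.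
  have /choice[c hc] : forall sa : bool * T, exists c, sa.2 <= eta -> c < Omega /\
      forall b, c < b -> `|w (\pi_Y (tilt sa.1 b sa.2, sheet sa.1)) - 2^-1| < k.+1%:R^-1.
    move=> [s a]; have [ae|] := pselect (a <= eta); last by exists Omega.
    by have [c cO hc] := weight_eventually_half s (le_lt_trans ae eO) _ e0; exists c.
  have cS : countable (c @` [set sa | sa.2 <= eta]).
    apply: sub_countable (card_image_le _ _) _.
    have sub : [set sa : bool * T | sa.2 <= eta] `<=` setT `*` [set a | a <= eta] by [].
    apply: sub_countable (subset_card_le sub) _.
    by apply: countableX; [exact: countableP|exact: countable_le eO].
  have [|xi xiO hxi] := countable_bounded cS; first by move=> _ [sa /hc[cO _] <-].
  exists xi => // s a b ae xib; apply: (hc (s, a) ae).2.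
  by apply: lt_le_trans xib; apply: hxi; exists (s, a).
have tilt_diag s : tilt s gam gam = (gam, gam) by case: s.
have half_below s a : a < gam -> w (\pi_Y (tilt s gam a, sheet s)) = 2^-1.
  move=> ag; apply/eqP; rewrite -subr_eq0; apply/eqP/norm_lt_invS_eq0 => k.
  have [eta [xi [/andP[aeta _] xig P]]] := hgam k a ag.
  exact: P s a gam (ltW aeta) xig.
exists gam => // s; apply/eqP; rewrite -subr_eq0; apply/eqP/norm_lt_eq0 => e e0.
have [M1 [M2 [n1 n2 sub]]] := weight_tilt_near s gam (lexx gam) gO _ e0.
have [c cg M2c] := nbhs_left_itv d0g n2.
have [eta [_ [/andP[ceta etag] _ _]]] := hgam 0%N c cg.
have := sub gam eta (nbhs_singleton n1) (M2c _ ceta (ltW etag)) (ltW etag).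
by rewrite half_below // tilt_diag distrC.
Qed.

End Weights.

End FirstUncountable.

Theorem mainTheorem6 {d : Order.disp_t} (T : orderTopologicalType d) (Omega : T)
  (R : realType)
  (* [T] is [0, Omega] with [Omega] the first uncountable ordinal. *)
  (hmax : forall a : T, (a <= Omega)%O)
  (hwo : forall A : set T, A !=set0 -> exists2 a, A a & forall b, A b -> (a <= b)%O)
  (hcount : forall a : T, (a < Omega)%O -> countable [set b : T | (b < a)%O])
  (hunc : ~ countable [set b : T | (b < Omega)%O]) :
  [/\ branched_cover (@piY d T Omega),
      [/\ (fiber Omega (Omega, Omega) #= `I_1)%card,
      (forall x, stratum2 Omega x -> (fiber Omega x #= `I_2)%card) &
      (forall x, stratum3 Omega x -> (fiber Omega x #= `I_3)%card)],
      [/\ normal_space (subspace (stratum1 Omega)),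
          normal_space (subspace (stratum2 Omega)) &
          normal_space (subspace (stratum3 Omega))] &
      ~ exists w : Ysp Omega -> R,
          [/\ (forall y, 0 <= w y) /\
              (forall x, \sum_(y \in fiber Omega x) w y = 1),
              (forall x, stratum2 Omega x ->
                 forall y, fiber Omega x y -> w y = 2^-1),
              (forall y, fiber Omega (Omega, Omega) y -> w y = 1),
              (forall x, stratum3 Omega x ->
                 forall y, fiber Omega x y -> 0 < w y) &
              (forall f : Ysp Omega -> R, continuous f ->
                 continuous (fun x : Xsp T =>
                   \sum_(y \in fiber Omega x) w y * f y))]].
Proof.
split.
- split.
  + by split; [exact: X_compact hmax hwo|exact: X_hausdorff].
  + by split; [exact/Y_compact/(T_compact hmax hwo)|exact: Y_hausdorff].
  + exact: piY_continuous.
  + exact: piY_open.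
  + by split; [exact: piY_surjective|exists 3%N; exact: fiber_card_le3].
- by split; [exact: fiber_card1|exact: fiber_card2|exact: fiber_card3].
- split; [exact: stratum1_normal hmax hwo|exact: stratum2_normal hmax hwo hcount hunc|
          exact: stratum3_normal hmax hwo hcount hunc].
move=> [w [[_ w_total] w_stratum2 _ w_pos w_continuous]].
have [gam gO half] :=
  weight_diagonal_half hmax hwo hcount hunc _ _ w_continuous w_stratum2.
have gam3 : stratum3 Omega (gam, gam) by [].
have := w_pos _ gam3 (\pi_(Ysp Omega) ((gam, gam), lbullet)).
move=> /(_ (proj2 (fiberP _ _) (ex_intro _ _ erefl))).
have halves : 2^-1 + 2^-1 = 1 :> R by rewrite [RHS](splitr 1) mul1r.
have := w_total (gam, gam); rewrite fsbig_fiber3 // (half false) (half true) halves.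
by rewrite -[X in _ = X]add0r => /addIr ->; rewrite ltxx.
Qed.
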